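(* When the characteristic functions range over $V_2$, there exists an irrevocable (non-wasteful) distribution policy whose competitive ratio with respect to greedy players is $\alpha=1$.
   Context: Players: a finite set $N=\{a_1,\dots,a_n\}$. A characteristic function is $v:2^N\to\mathbb{R}_{\ge 0}$ with $v(\emptyset)=0$. There are fixed, known constants $0<\mathsf{min}\le\mathsf{max}$ and every $v$ considered is monotone and bounded: $\mathsf{min}\le v(S)\le v(T)\le\mathsf{max}$ for all nonempty $S\subseteq T\subseteq N$. $V_2$ denotes the set of such $v$ with $2\mathsf{min}\le\mathsf{max}<3\mathsf{min}$. A coalition structure is a partition $C$ of $N$; its social welfare is $\mathsf{SW}(C\mid v)=\sum_{S\in C}v(S)$. Online process: an arrival order is a permutation $\pi=(\pi_1,\dots,\pi_n)$ of $N$; player $\pi_t$ arrives at time $t$. For $S\subseteq N$, $\pi_{|S}$ denotes the players of $S$ in the relative order of $\pi$; $\pi_{|S}$ is a prefix of $\pi_{|T}$ if $S\subseteq T$ and the players of $S$ are the first $|S|$ players of $\pi_{|T}$. Let $C^{t-1}$ be the coalition structure of players arrived before time $t$ ($C^0=\emptyset$). At time $t$, player $\pi_t$ either joins an existing coalition $S\in C^{t-1}$ or forms $\{\pi_t\}$ (choice $S=\emptyset$); decisions are never revised. A distribution policy $\varphi$ assigns to every $S\subseteq N$ and order $\pi_{|S}$ a vector $(\varphi_i(S,\pi_{|S}\mid v))_{i\in S}$ with $\sum_{i\in S}\varphi_i(S,\pi_{|S})=v(S)$ (non-wasteful); it may depend on the whole function $v$. It is irrevocable if for every $\pi$, every $S\subseteq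 T\subseteq N$ with $\pi_{|S}$ a prefix of $\pi_{|T}$ and every $i\in S$, $\varphi_i(S,\pi_{|S})\le\varphi_i(T,\pi_{|T})$. Greedy players: $\pi_t$ chooses $S^*\in\arg\max_{S\in C^{t-1}\cup\{\emptyset\}}\varphi_{\pi_t}(S\cup\{\pi_t\},\pi_{|S\cup\{\pi_t\}})$ (predetermined tie-breaking). $C_g(v,\pi\mid\varphi)$ is the final structure. The competitive ratio over a class is $\alpha=\inf_{v,\pi}\mathsf{SW}(C_g(v,\pi\mid\varphi))/\max_C\mathsf{SW}(C\mid v)$, over $v$ in the class and all arrival orders $\pi$. *)

From HB Require Import structures.
From mathcomp Require Import all_boot all_order all_algebra.
Set Implicit Arguments. Unset Strict Implicit. Unset Printing Implicit Defensive.
Import Order.TTheory GRing.Theory Num.Theory.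
Local Open Scope ring_scope.

Section Coalitions.
Variables (R : realFieldType) (T : finType).

Definition charfun := {set T} -> R.

Definition in_class (mn mx : R) (v : charfun) : Prop :=
  v set0 = 0 /\
  forall S S' : {set T}, S != set0 -> S \subset S' ->
    [/\ mn <= v S, v S <= v S' & v S' <= mx].

Definition arrival_order (pi : seq T) : Prop := perm_eq pi (enum T).

Definition restr (pi : seq T) (S : {set T}) : seq T := [seq x <- pi | x \in S].

(* a distribution policy: phi v s i is the payoff of player i in the
   coalition S (with order s = pi_{|S}) under characteristic function v *)
Definition policy := charfun -> seq T -> T -> R.

Definition non_wasteful (mn mx : R) (phi : policy) : Prop :=
  forall v, in_class mn mx v ->
  forall pi, arrival_order pi -> forall S : {set T},
    \sum_(i in S) phi v (restr pi S) i = v S.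

Definition irrevocable (mn mx : R) (phi : policy) : Prop :=
  forall v, in_class mn mx v ->
  forall pi, arrival_order pi -> forall S S' : {set T},
    S \subset S' -> prefix (restr pi S) (restr pi S') ->
    forall i, i \in S -> phi v (restr pi S) i <= phi v (restr pi S') i.

(* a (predetermined) tie-breaking rule: given the arriving player and the
   list of options (existing coalitions, set0 = form a singleton) that
   maximise its payoff, choose one of them *)
Definition tiebreak := T -> seq {set T} -> {set T}.
Definition valid_tiebreak (tb : tiebreak) : Prop :=
  forall p (l : seq {set T}), l != [::] -> tb p l \in l.

Fixpoint greedy_aux (v : charfun) (phi : policy) (tb : tiebreak)
    (pi : seq T) (C : seq {set T}) (rest : seq T) : seq {set T} :=
  match rest with
  | [::] => C
  | p :: r =>
    let opts := set0 :: C in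
    let sc := fun S : {set T} => phi v (restr pi (p |: S)) p in
    let best := [seq S <- opts | all (fun S' => sc S' <= sc S) opts] in
    let S := tb p best in
    let C' := if S == set0 then [set p] :: C
              else [seq (if X == S then p |: X else X) | X <- C] in
    greedy_aux v phi tb pi C' r
  end.

Definition greedy_outcome v phi tb (pi : seq T) : seq {set T} :=
  greedy_aux v phi tb pi [::] pi.

Definition SW (v : charfun) (C : seq {set T}) : R := \sum_(S <- C) v S.

Definition OPT (v : charfun) : R :=
  \big[Num.max/0]_(P : {set {set T}} | partition P [set: T])
     \sum_(S in P) v S.

Definition ratios (mn mx : R) (phi : policy) (tb : tiebreak) : R -> Prop :=
  fun r => exists v pi, [/\ in_class mn mx v, arrival_order pi &
             r = SW v (greedy_outcome v phi tb pi) / OPT v].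

Definition is_inf (A : R -> Prop) (a : R) : Prop :=
  (forall r, A r -> a <= r) /\ (forall b, (forall r, A r -> b <= r) -> b <= a).

Definition competitive_ratio_is mn mx phi tb (alpha : R) : Prop :=
  is_inf (ratios mn mx phi tb) alpha.

End Coalitions.

From HB Require Import structures.
From mathcomp Require Import all_boot all_order all_algebra.
From mathcomp Require Import lra.
Import Order.TTheory GRing.Theory Num.Theory.
Local Open Scope ring_scope.
Set Implicit Arguments. Unset Strict Implicit. Unset Printing Implicit Defensive.

(* Let P* be an optimal coalition structure with as many coalitions as possible.
   Then v Y + v (B :\: Y) < v B for every coalition B of P* and every nonempty
   proper part Y of B, since otherwise splitting B would give an optimal structure
   with more coalitions; and |B| <= 2, since splitting a larger B into three parts
   would gain at least 3 mn - mx > 0.  The policy pays marginal contributions, in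
   arrival order, inside the coalitions of P*, and leaves the last member of any
   other coalition S with at most v S - (|S| - 1) mx <= 0.  Hence an arriving
   player strictly prefers joining its partner in P* when the partner is already
   there, and otherwise strictly prefers staying alone: whatever the arrival order
   and the tie-breaking, greedy players rebuild P* and reach the optimal welfare. *)

Lemma partition_block_eq (T : finType) (P : {set {set T}}) (D A B : {set T}) x :
  partition P D -> A \in P -> B \in P -> x \in A -> x \in B -> A = B.
Proof.
move=> /partition_trivIset tP PA PB xA xB.
by rewrite -(def_pblock tP PA xA) (def_pblock tP PB xB).
Qed.

Lemma partitionT_pblock_mem (T : finType) (P : {set {set T}}) (p : T) :
  partition P [set: T] -> pblock P p \in P.
Proof. by move=> partP; apply: pblock_mem; rewrite (cover_partition partP) inE. Qed.

Lemma partitionT_mem_pblock (T : finType) (P : {set {set T}}) (p : T) :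
  partition P [set: T] -> p \in pblock P p.
Proof. by move=> partP; rewrite mem_pblock (cover_partition partP) inE. Qed.

Lemma partition_notin (T : finType) (P : {set {set T}}) (D A : {set T}) :
  partition P D -> A != set0 -> [disjoint A & D] -> A \notin P.
Proof.
move=> partP /set0Pn[x xA] dAD; apply/negP => PA.
have xD : x \in D by rewrite -(cover_partition partP); apply/bigcupP; exists A.
by rewrite (disjointFr dAD xA) in xD.
Qed.

Section SplitBlock.
Variables (T : finType) (P : {set {set T}}) (D B Y : {set T}).
Hypotheses (partP : partition P D) (PB : B \in P) (sYB : Y \subset B)
  (Y_neq0 : Y != set0) (BY_neq0 : B :\: Y != set0).

Definition split_block := Y |: ((B :\: Y) |: (P :\ B)).

Let disjoint_rest : [disjoint B :\: Y & D :\: B].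
Proof. by rewrite disjoint_subset; apply/subsetP => x; rewrite !inE => /andP[_ ->]. Qed.

Let disjoint_Y : [disjoint Y & (B :\: Y) :|: (D :\: B)].
Proof.
rewrite disjoint_subset; apply/subsetP => x xY.
by rewrite !inE xY (subsetP sYB x xY).
Qed.

Let partition_rest :
  partition ((B :\: Y) |: (P :\ B)) ((B :\: Y) :|: (D :\: B)).
Proof. exact: partitionU1 (partitionD1 partP PB) BY_neq0 disjoint_rest. Qed.

Lemma split_block_partition : partition split_block D.
Proof.
have sBD : B \subset D.
  by rewrite -(cover_partition partP); apply: bigcup_sup.
have defD : Y :|: ((B :\: Y) :|: (D :\: B)) = D.
  by rewrite setUA -{1}(setIidPr sYB) setID -{1}(setIidPr sBD) setID.
by rewrite -defD; apply: partitionU1.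
Qed.

Lemma card_split_block : #|split_block| = #|P|.+1.
Proof.
rewrite cardsU1 (partition_notin partition_rest Y_neq0 disjoint_Y).
rewrite cardsU1 (partition_notin (partitionD1 partP PB) BY_neq0 disjoint_rest).
by rewrite (cardsD1 B P) PB.
Qed.

Lemma big_split_block (V : zmodType) (F : {set T} -> V) :
  \sum_(S in split_block) F S = \sum_(S in P) F S - F B + F Y + F (B :\: Y).
Proof.
rewrite big_setU1 ?(partition_notin partition_rest) //=.
rewrite big_setU1 ?(partition_notin (partitionD1 partP PB)) //=.
rewrite (big_setD1 B PB) /= [F B + _]addrC addrK.
by rewrite [_ + F Y]addrC addrAC addrA.
Qed.

End SplitBlock.

Section OptimalPartition.
Variables (R : realFieldType) (T : finType) (v : charfun R T).

Definition optimal (P : {set {set T}}) : bool :=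
  partition P [set: T] && (\sum_(S in P) v S == OPT v).

Definition opt_part : {set {set T}} :=
  fintype.arg_max (odflt set0 [pick P | optimal P]) optimal (fun P => #|P|).

Lemma le_OPT (P : {set {set T}}) :
  partition P [set: T] -> \sum_(S in P) v S <= OPT v.
Proof. by move=> partP; rewrite /OPT; apply: le_bigmax_cond. Qed.

Hypotheses (T_gt0 : (0 < #|T|)%N) (v_ge0 : forall S, 0 <= v S).

Lemma partition_setT1 : partition [set [set: T]] [set: T].
Proof.
apply/and3P; split; [by rewrite cover1 | exact: trivIset1 |].
by rewrite in_set1 eq_sym -card_gt0 cardsT.
Qed.

Lemma exists_optimal : exists P, optimal P.
Proof.
have [P partP defOPT] := @eq_bigmax _ _ _ 0 _ (fun P => partition P [set: T])
  (fun P => \sum_(S in P) v S) partition_setT1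
  (fun P _ => sumr_ge0 _ (fun S _ => v_ge0 S)).
by exists P; rewrite /optimal -[partition P _]/(P \in partition^~ _) partP /OPT defOPT /=.
Qed.

Lemma opt_part_optimal : optimal opt_part.
Proof.
have [P optP] := exists_optimal; rewrite /opt_part.
by case: pickP => [P0 optP0 | /(_ P)]; [case: arg_maxnP | rewrite optP].
Qed.

Lemma opt_part_max (Q : {set {set T}}) : optimal Q -> (#|Q| <= #|opt_part|)%N.
Proof.
have [P optP] := exists_optimal; rewrite /opt_part.
by case: pickP => [P0 optP0 | /(_ P)]; [case: arg_maxnP => // P1 _; apply | rewrite optP].
Qed.

Lemma opt_part_partition : partition opt_part [set: T].
Proof. by case/andP: opt_part_optimal. Qed.

Lemma opt_part_sum : \sum_(S in opt_part) v S = OPT v.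
Proof. by case/andP: opt_part_optimal => _ /eqP. Qed.

Lemma opt_block_split_lt (B Y : {set T}) :
  B \in opt_part -> Y \subset B -> Y != set0 -> B :\: Y != set0 ->
  v Y + v (B :\: Y) < v B.
Proof.
move=> PB sYB Y0 BY0; rewrite ltNge; apply/negP => le_split.
have partQ := split_block_partition opt_part_partition PB sYB Y0 BY0.
have optQ : optimal (split_block opt_part B Y).
  rewrite /optimal partQ eq_le le_OPT //=.
  rewrite (big_split_block opt_part_partition PB sYB Y0 BY0) opt_part_sum.
  lra.
have := opt_part_max optQ.
by rewrite (card_split_block opt_part_partition PB sYB Y0 BY0) ltnn.
Qed.

End OptimalPartition.

Section ClassBounds.
Variables (R : realFieldType) (T : finType) (mn mx : R) (v : charfun R T).
Hypotheses (mn_gt0 : 0 < mn) (vC : in_class mn mx v).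

Lemma in_class_ge_min (S : {set T}) : S != set0 -> mn <= v S.
Proof. by case: vC => _ /(_ S S) vS /vS[]. Qed.

Lemma in_class_ge0 (S : {set T}) : 0 <= v S.
Proof.
have [-> | S0] := eqVneq S set0; first by case: vC => ->.
exact: le_trans (ltW mn_gt0) (in_class_ge_min S0).
Qed.

Lemma in_class_le_max (S : {set T}) : S != set0 -> v S <= mx.
Proof. by case: vC => _ /(_ S S) vS /vS[]. Qed.

Lemma in_class_bounded (S : {set T}) : mn <= mx -> 0 <= v S <= mx.
Proof.
move=> mn_le_mx; rewrite in_class_ge0 /=; have [-> | S0] := eqVneq S set0.
  by case: vC => -> _; apply: le_trans (ltW mn_gt0) mn_le_mx.
exact: in_class_le_max.
Qed.

Lemma opt_block_card_le2 (B : {set T}) :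
  (0 < #|T|)%N -> mx < 3 * mn -> B \in opt_part v -> (#|B| <= 2)%N.
Proof.
move=> T_gt0 mx_lt3 PB; rewrite leqNgt; apply/negP => B_gt2.
have partP := opt_part_partition T_gt0 in_class_ge0.
have [a aB] : exists a, a \in B.
  by apply/set0Pn; rewrite -card_gt0 (leq_trans _ B_gt2).
have Ba_gt1 : (1 < #|B :\ a|)%N by move: B_gt2; rewrite (cardsD1 a B) aB.
have [b bBa] : exists b, b \in B :\ a.
  by apply/set0Pn; rewrite -card_gt0 (leq_trans _ Ba_gt1).
have Bab0 : B :\ a :\ b != set0.
  by rewrite -card_gt0; move: Ba_gt1; rewrite (cardsD1 b (B :\ a)) bBa.
have a0 : [set a] != set0 by apply/set0Pn; exists a; rewrite inE.
have b0 : [set b] != set0 by apply/set0Pn; exists b; rewrite inE.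
have Ba0 : B :\ a != set0 by apply/set0Pn; exists b.
have sbBa : [set b] \subset B :\ a by rewrite sub1set.
have saB : [set a] \subset B by rewrite sub1set.
have partP1 := split_block_partition partP PB saB a0 Ba0.
have P1Ba : B :\ a \in split_block (opt_part v) B [set a] by rewrite !inE eqxx orbT.
have partP2 := split_block_partition partP1 P1Ba sbBa b0 Bab0.
(* Splitting B into [set a], [set b] and the rest gains at least 3 mn - mx > 0. *)
have := le_OPT v partP2.
rewrite (big_split_block partP1 P1Ba sbBa b0 Bab0) (big_split_block partP PB saB a0 Ba0).
rewrite (opt_part_sum T_gt0 in_class_ge0).
have := in_class_ge_min a0; have := in_class_ge_min b0.
have := in_class_ge_min Bab0; have := in_class_le_max (partition_neq0 partP PB).
lra.
Qed.

End ClassBounds.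

Lemma in_class_const (R : realFieldType) (T : finType) (mn mx : R) : mn <= mx ->
  in_class mn mx (fun S : {set T} => if S == set0 then 0 else mn).
Proof.
move=> mn_le_mx; split=> [| S S' S0 sSS']; first by rewrite eqxx.
have S'0 : S' != set0 by apply: contraNneq S0 => S'0; rewrite -subset0 -S'0.
by rewrite (negbTE S0) (negbTE S'0) lexx.
Qed.

Section Restriction.
Variable T : finType.

Lemma set_restr (s : seq T) (S : {set T}) :
  S \subset [set x in s] -> [set x in restr s S] = S.
Proof.
move=> sSs; apply/setP => x; rewrite !inE mem_filter andb_idr //.
by move=> /(subsetP sSs); rewrite inE.
Qed.

Lemma size_restr (s : seq T) (S : {set T}) :
  uniq s -> S \subset [set x in s] -> size (restr s S) = #|S|.
Proof.
move=> us sSs; rewrite -{2}(set_restr sSs) cardsE.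
by apply/esym/card_uniqP; apply: filter_uniq.
Qed.

Lemma arrival_order_uniq (pi : seq T) : arrival_order pi -> uniq pi.
Proof. by move=> ao; rewrite (perm_uniq ao) enum_uniq. Qed.

Lemma mem_restr_arrival (pi : seq T) (S : {set T}) x :
  arrival_order pi -> (x \in restr pi S) = (x \in S).
Proof. by move=> ao; rewrite mem_filter (perm_mem ao) mem_enum andbT. Qed.

Lemma uniq_cat_cons_notin (done rest : seq T) p :
  uniq (done ++ p :: rest) -> p \notin done.
Proof. by rewrite cat_uniq /= => /and3P[_ /norP[]]. Qed.

Lemma restr_arrival_cons (done rest : seq T) p (X : {set T}) :
  uniq (done ++ p :: rest) -> X \subset [set x in done] ->
  restr (done ++ p :: rest) (p |: X) = rcons (restr done X) p.
Proof.
rewrite cat_uniq /= => /and4P[_ /norP[pdone /hasPn restr_done] prest _] sXd.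
rewrite /restr filter_cat /= setU11 -cats1; congr (_ ++ _ :: _).
  apply: eq_in_filter => x xd; rewrite in_setU1.
  by case: eqP => // xp; rewrite -xp xd in pdone.
apply/eqP; rewrite -[_ == _]negbK -has_filter; apply/hasP => -[x xr].
rewrite in_setU1 => /orP[/eqP xp | /(subsetP sXd)]; last first.
  by rewrite inE (negbTE (restr_done x xr)).
by rewrite -xp xr in prest.
Qed.

End Restriction.

Section BlockPolicy.
Variables (R : realFieldType) (T : finType) (mx : R).

Definition inside_block (v : charfun R T) (S : {set T}) : bool :=
  [exists B in opt_part v, S \subset B].

(* Inside a block of [opt_part v] players receive their marginal contributions in
   arrival order; in any other coalition all players but the last receive [mx] and
   the last one absorbs the remainder, which makes joining it unattractive. *)
Definition block_policy : policy R T := fun v s i =>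
  if i \notin s then 0
  else if inside_block v [set x in s] then
    v [set x in take (index i s).+1 s] - v [set x in take (index i s) s]
  else if (index i s).+1 == size s then v [set x in s] - (size s).-1%:R * mx
  else mx.

Lemma sum_block_policy (v : charfun R T) (s : seq T) :
  v set0 = 0 -> uniq s -> \sum_(i <- s) block_policy v s i = v [set x in s].
Proof.
move=> v0; case: s => [| x0 s'] us; first by rewrite big_nil set_nil.
set s := x0 :: s'.
pose marginal k := v [set x in take k.+1 s] - v [set x in take k s].
pose share k := if k.+1 == size s then v [set x in s] - (size s).-1%:R * mx else mx.
rewrite (big_nth x0) (eq_big_nat _ _ (F2 := fun k =>
  if inside_block v [set x in s] then marginal k else share k)); last first.
  by move=> k /andP[_ ks]; rewrite /block_policy (mem_nth x0 ks) (index_uniq x0 ks us).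
case: (inside_block v _); first by rewrite telescope_sumr // take_size take0 set_nil v0 subr0.
rewrite big_nat_recr // /share eqxx (eq_big_nat _ _ (F2 := fun=> mx)); last first.
  by move=> k /andP[_ k_lt]; rewrite eqSS ltn_eqF.
by rewrite sumr_const_nat subn0 mulr_natl /= addrC subrK.
Qed.

Lemma block_policy_non_wasteful (mn : R) : non_wasteful mn mx block_policy.
Proof.
move=> v [v0 _] pi ao S.
have us := filter_uniq (mem S) (arrival_order_uniq ao).
rewrite -[in RHS](set_restr (S := S) (s := pi)); last first.
  by apply/subsetP => x _; rewrite inE (perm_mem ao) mem_enum.
rewrite -sum_block_policy // big_uniq //; apply: eq_bigl => x.
by rewrite mem_restr_arrival.
Qed.

Lemma block_policy_prefix (v : charfun R T) (s t : seq T) i :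
  (forall S, 0 <= v S <= mx) -> i \in s ->
  block_policy v s i <= block_policy v (s ++ t) i.
Proof.
move=> v_bnd si; have i_lt : (index i s < size s)%N by rewrite index_mem.
case: t => [| y t]; first by rewrite cats0.
rewrite /block_policy mem_cat si /= index_cat si !takel_cat // 1?ltnW //.
have -> : ((index i s).+1 == size (s ++ y :: t)) = false.
  by apply: ltn_eqF; rewrite size_cat addnS ltnS (leq_trans i_lt) ?leq_addr.
have sub_st : [set x in s] \subset [set x in s ++ y :: t].
  by apply/subsetP => x; rewrite !inE mem_cat => ->.
case: (boolP (inside_block v [set x in s ++ y :: t])) => [/existsP[B /andP[PB sB]] | _].
  suff -> : inside_block v [set x in s] by [].
  by apply/existsP; exists B; rewrite PB (subset_trans sub_st sB).
have [/andP[v1 v1'] /andP[v2 v2']] := (v_bnd [set x in take (index i s).+1 s],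
  v_bnd [set x in take (index i s) s]).
have /andP[v3 v3'] := v_bnd [set x in s].
have n_ge0 : 0 <= (size s).-1%:R * mx by rewrite mulr_ge0 ?ler0n ?(le_trans v3).
by case: (inside_block _ _); [lra | case: ifP => _; lra].
Qed.

Lemma block_policy_irrevocable (mn : R) :
  0 < mn -> mn <= mx -> irrevocable mn mx block_policy.
Proof.
move=> mn_gt0 mn_le_mx v vC pi ao S S' _ /prefixP[t ->] i iS.
apply: block_policy_prefix; first by move=> X; apply: (in_class_bounded mn_gt0 vC).
by rewrite mem_restr_arrival.
Qed.

Definition join_payoff (v : charfun R T) (p : T) (X : {set T}) : R :=
  v (p |: X) - (if inside_block v (p |: X) then v X else #|X|%:R * mx).

Lemma block_policy_join (v : charfun R T) (done rest : seq T) p (X : {set T}) :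
  uniq (done ++ p :: rest) -> X \subset [set x in done] ->
  block_policy v (restr (done ++ p :: rest) (p |: X)) p = join_payoff v p X.
Proof.
move=> upi sXd; rewrite restr_arrival_cons // /block_policy mem_rcons mem_head /=.
have pu : p \notin restr done X.
  by rewrite mem_filter negb_and (uniq_cat_cons_notin upi) orbT.
have set_u : [set x in rcons (restr done X) p] = p |: X.
  by apply/setP => x; rewrite -[in RHS](set_restr sXd) !inE mem_rcons inE.
rewrite -cats1 index_cat (negbTE pu) /= eqxx addn0 size_cat addn1 eqxx.
rewrite take_oversize ?size_cat ?addn1 // take_size_cat // cats1 set_u.
rewrite (set_restr sXd) /join_payoff (size_restr _ sXd); first by case: ifP.
by move: upi; rewrite cat_uniq => /andP[].
Qed.

End BlockPolicy.

Lemma tiebreak_strict_argmax (R : numDomainType) (T : finType) (tb : tiebreak T)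
    p (f : {set T} -> R) (opts : seq {set T}) (S0 : {set T}) :
  valid_tiebreak tb -> S0 \in opts ->
  (forall S, S \in opts -> S != S0 -> f S < f S0) ->
  tb p [seq S <- opts | all (fun S' => f S' <= f S) opts] = S0.
Proof.
move=> vtb S0_opt S0_max; set best := [seq S <- _ | _].
have S0_best : S0 \in best.
  rewrite mem_filter S0_opt andbT; apply/allP => S S_opt.
  by have [-> | /(S0_max S S_opt)/ltW] := eqVneq S S0.
have := vtb p best; rewrite mem_filter => /(_ _)/andP[|/allP S_max S_opt].
  by apply/eqP => best0; rewrite best0 in S0_best.
apply/eqP; apply/negPn/negP => /(S0_max _ S_opt)/lt_le_trans/(_ (S_max _ S0_opt)).
by rewrite ltxx.
Qed.

Lemma setI_setU1 (T : finType) (B D : {set T}) p :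
  B :&: (p |: D) = if p \in B then p |: (B :&: D) else B :&: D.
Proof.
apply/setP => x; case: ifP => pB; rewrite !inE;
  by case: (eqVneq x p) => [-> | _]; rewrite ?pB ?andbT ?andbF.
Qed.

Section Traces.
Variables (T : finType) (P : {set {set T}}).
Hypothesis partP : partition P [set: T].

(* The invariant of the greedy process: C is P restricted to the arrived players D. *)
Definition traces_of (D : {set T}) (C : seq {set T}) : Prop :=
  uniq C /\ forall X, X \in C <-> exists2 B, B \in P & X = B :&: D /\ X != set0.

Let pblockP (p : T) : pblock P p \in P := partitionT_pblock_mem p partP.

Let mem_blockE (p : T) (B : {set T}) : B \in P -> (p \in B) = (B == pblock P p).
Proof.
move=> PB; apply/idP/eqP => [pB | ->]; last exact: partitionT_mem_pblock.
by rewrite (def_pblock (partition_trivIset partP) PB pB).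
Qed.

Lemma traces_of_new (p : T) (D : {set T}) (C : seq {set T}) :
  p \notin D -> pblock P p :&: D = set0 -> traces_of D C ->
  traces_of (p |: D) ([set p] :: C).
Proof.
move=> pD Bp0 [uC memC]; split.
  rewrite /= uC andbT; apply/negP => /memC[B _ [defp _]].
  by have := set11 p; rewrite defp inE (negbTE pD) andbF.
move=> X; rewrite inE; split.
  case/orP => [/eqP -> | /memC[B PB [-> X0]]].
    exists (pblock P p) => //; rewrite setI_setU1 mem_blockE // eqxx Bp0 setU0.
    by split => //; apply/set0Pn; exists p; rewrite inE.
  exists B => //; rewrite setI_setU1 mem_blockE //.
  by case: (eqVneq B (pblock P p)) => [BBp | _]; first by rewrite BBp Bp0 eqxx in X0.
case=> B PB [->]; rewrite setI_setU1 mem_blockE //.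
case: (eqVneq B (pblock P p)) => [-> | _] X0; first by rewrite Bp0 setU0 eqxx.
by apply/orP; right; apply/memC; exists B.
Qed.

Lemma traces_of_join (p : T) (D : {set T}) (C : seq {set T}) :
  p \notin D -> pblock P p :&: D != set0 -> traces_of D C ->
  traces_of (p |: D) [seq if X == pblock P p :&: D then p |: X else X | X <- C].
Proof.
set X0 := pblock P p :&: D => pD X00 [uC memC].
have pC X : X \in C -> p \notin X.
  by case/memC => B _ [-> _]; rewrite inE negb_and pD orbT.
have X0C : X0 \in C by apply/memC; exists (pblock P p).
have other_block B : B \in P -> B :&: D != set0 -> B :&: D != X0 -> p \notin B.
  move=> PB _; apply: contra => pB; apply/eqP; congr (_ :&: D).
  by apply/eqP; rewrite -mem_blockE.
split.
  rewrite map_inj_in_uniq // => X Y XC YC.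
  case: (eqVneq X X0) => [-> | XX0]; case: (eqVneq Y X0) => [-> | YX0];
    rewrite ?eqxx ?(negbTE XX0) ?(negbTE YX0) // => defXY.
    by have := pC _ YC; rewrite -defXY setU11.
  by have := pC _ XC; rewrite defXY setU11.
move=> X; split.
  case/mapP => Y /[dup] YC /memC[B PB [defY Y0]] ->.
  case: (eqVneq Y X0) => [-> | YX0].
    exists (pblock P p) => //; rewrite setI_setU1 mem_blockE // eqxx.
    by split => //; apply/set0Pn; exists p; rewrite setU11.
  exists B => //; rewrite setI_setU1 (negbTE (other_block B PB _ _)) -?defY //.
case=> B PB [->]; rewrite setI_setU1 mem_blockE //.
case: (eqVneq B (pblock P p)) => [-> _ | BBp X0_ne0].
  by apply/mapP; exists X0; rewrite ?eqxx.
have BX0 : B :&: D != X0.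
  apply: contraNneq BBp => BX0; apply/eqP; have /set0Pn[x xBD] := X0_ne0.
  have /setIP[xB _] := xBD; move: xBD; rewrite BX0 => /setIP[xBp _].
  exact: partition_block_eq partP PB (pblockP p) xB xBp.
by apply/mapP; exists (B :&: D); rewrite ?(negbTE BX0) //; apply/memC; exists B.
Qed.

End Traces.

Lemma big_traces_of_setT (T : finType) (P : {set {set T}}) (C : seq {set T})
    (V : nmodType) (F : {set T} -> V) :
  partition P [set: T] -> traces_of P [set: T] C ->
  \sum_(X <- C) F X = \sum_(X in P) F X.
Proof.
move=> partP [uC memC]; rewrite big_uniq //; apply: eq_bigl => X.
apply/idP/idP => [/memC[B PB [-> _]] | PX]; first by rewrite setIT.
by apply/memC; exists X; rewrite ?setIT ?(partition_neq0 partP PX).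
Qed.

Section Greedy.
Variables (R : realFieldType) (T : finType) (mn mx : R) (v : charfun R T).
Hypotheses (T_gt0 : (0 < #|T|)%N) (mn_gt0 : 0 < mn) (mx_lt3 : mx < 3 * mn)
  (vC : in_class mn mx v).

Let partP : partition (opt_part v) [set: T] :=
  opt_part_partition T_gt0 (in_class_ge0 mn_gt0 vC).

Let pblockP (p : T) : pblock (opt_part v) p \in opt_part v :=
  partitionT_pblock_mem p partP.
Let mem_pblockP (p : T) : p \in pblock (opt_part v) p :=
  partitionT_mem_pblock p partP.

Lemma join_payoff_alone p : join_payoff mx v p set0 = v [set p].
Proof.
rewrite /join_payoff setU0; case: vC => -> _.
suff -> : inside_block v [set p] by rewrite subr0.
by apply/existsP; exists (pblock (opt_part v) p); rewrite pblockP sub1set mem_pblockP.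
Qed.

Lemma join_payoff_own p (X : {set T}) :
  X != set0 -> X \subset pblock (opt_part v) p :\ p -> v [set p] < join_payoff mx v p X.
Proof.
move=> X0 sXB; set B := pblock (opt_part v) p.
have defX : X = B :\ p.
  apply/eqP; rewrite eqEcard sXB /=.
  have := opt_block_card_le2 mn_gt0 vC T_gt0 mx_lt3 (pblockP p).
  rewrite (cardsD1 p B) mem_pblockP add1n ltnS => /leq_trans; apply.
  by rewrite card_gt0.
have inside : inside_block v (p |: X).
  by apply/existsP; exists B; rewrite pblockP defX setD1K ?mem_pblockP ?subxx.
rewrite /join_payoff inside defX setD1K ?mem_pblockP //.
have p0 : [set p] != set0 by apply/set0Pn; exists p; rewrite inE.
have := opt_block_split_lt T_gt0 (in_class_ge0 mn_gt0 vC) (pblockP p).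
by move=> /(_ [set p]); rewrite sub1set mem_pblockP -defX => /(_ isT p0 X0); lra.
Qed.

Lemma join_payoff_foreign p (X B : {set T}) :
  X != set0 -> B \in opt_part v -> X \subset B -> p \notin B ->
  join_payoff mx v p X < v [set p].
Proof.
move=> X0 PB sXB pB; have [x xX] := set0Pn _ X0.
have outside : ~~ inside_block v (p |: X).
  apply/existsP => -[B' /andP[PB' /subUsetP[pB' sXB']]].
  have B'B := partition_block_eq partP PB' PB (subsetP sXB' x xX) (subsetP sXB x xX).
  by move: pB'; rewrite sub1set B'B (negbTE pB).
rewrite /join_payoff (negbTE outside).
have pX0 : p |: X != set0 by apply/set0Pn; exists p; rewrite setU11.
have p0 : [set p] != set0 by apply/set0Pn; exists p; rewrite inE.
have vp_ge := in_class_ge_min vC p0; have vpX_le := in_class_le_max vC pX0.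
have mx_le : mx <= #|X|%:R * mx.
  apply: ler_peMl; last by rewrite ler1n card_gt0.
  by rewrite (le_trans (ltW mn_gt0)) // (le_trans vp_ge) // (in_class_le_max vC).
apply: le_lt_trans (lt_le_trans mn_gt0 vp_ge).
by rewrite subr_le0 (le_trans vpX_le).
Qed.

Variables (tb : tiebreak T) (pi : seq T).
Hypotheses (vtb : valid_tiebreak tb) (ao : arrival_order pi).

Lemma greedy_choice (done rest : seq T) p (C : seq {set T}) :
  pi = done ++ p :: rest -> traces_of (opt_part v) [set x in done] C ->
  let payoff S := block_policy mx v (restr pi (p |: S)) p in
  tb p [seq S <- set0 :: C | all (fun S' => payoff S' <= payoff S) (set0 :: C)]
    = pblock (opt_part v) p :&: [set x in done].
Proof.
move=> defpi [uC memC] payoff; set D := [set x in done].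
set X0 := pblock (opt_part v) p :&: D.
have upi : uniq (done ++ p :: rest) by rewrite -defpi arrival_order_uniq.
have pD : p \notin D by rewrite inE (uniq_cat_cons_notin upi).
have payoffE S : S \in set0 :: C -> payoff S = join_payoff mx v p S.
  rewrite /payoff defpi => /predU1P[-> | /memC[B _ [-> _]]].
    exact: block_policy_join (sub0set _).
  exact: block_policy_join (subsetIr _ _).
have X0_own : X0 != set0 -> v [set p] < join_payoff mx v p X0.
  move=> X00; apply: join_payoff_own X00 _; apply/subsetP => x /setIP[xB xD].
  by rewrite !inE xB andbT; apply: contraNneq pD => <-.
have X0_opt : X0 \in set0 :: C.
  have [-> | X00] := eqVneq X0 set0; first exact: mem_head.
  by rewrite inE; apply/orP; right; apply/memC; exists (pblock (opt_part v) p).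
have X0_ge : v [set p] <= join_payoff mx v p X0.
  have [-> | /X0_own/ltW //] := eqVneq X0 set0.
  by rewrite join_payoff_alone.
apply: (tiebreak_strict_argmax _ vtb X0_opt) => S S_opt SX0.
rewrite !payoffE //.
case/predU1P: S_opt SX0 => [-> X0_ne0 | /memC[B PB [defS S0]] SX0].
  by rewrite join_payoff_alone X0_own // eq_sym.
apply: lt_le_trans X0_ge; apply: (join_payoff_foreign S0 PB).
  by rewrite defS subsetIl.
apply: contraNN SX0 => pB; rewrite defS /X0.
by rewrite (def_pblock (partition_trivIset partP) PB pB) eqxx.
Qed.

Lemma greedy_aux_traces (rest done : seq T) (C : seq {set T}) :
  pi = done ++ rest -> traces_of (opt_part v) [set x in done] C ->
  traces_of (opt_part v) [set: T] (greedy_aux v (block_policy mx) tb pi C rest).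
Proof.
elim: rest done C => [| p rest IH] done C defpi tC /=.
  suff <- : [set x in done] = [set: T] by [].
  by apply/setP => x; rewrite !inE -(cats0 done) -defpi (perm_mem ao) mem_enum.
rewrite (greedy_choice defpi tC).
have pD : p \notin [set x in done].
  by rewrite inE (@uniq_cat_cons_notin _ _ rest) // -defpi arrival_order_uniq.
apply: (IH (rcons done p)); first by rewrite cat_rcons.
have -> : [set x in rcons done p] = p |: [set x in done].
  by apply/setP => x; rewrite !inE mem_rcons inE.
have [X00 | X00] := eqVneq (pblock (opt_part v) p :&: [set x in done]) set0.
  by apply: (traces_of_new partP).
by apply: (traces_of_join partP).
Qed.

Lemma greedy_welfare : SW v (greedy_outcome v (block_policy mx) tb pi) = OPT v.
Proof.
have tC0 : traces_of (opt_part v) [set x in [::]] [::].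
  by split=> // X; split=> // -[B _ []]; rewrite set_nil setI0 => -> /eqP.
rewrite /SW /greedy_outcome (big_traces_of_setT _ partP).
  exact: opt_part_sum T_gt0 (in_class_ge0 mn_gt0 vC).
exact: greedy_aux_traces tC0.
Qed.

End Greedy.

Lemma OPT_gt0 (R : realFieldType) (T : finType) (mn mx : R) (v : charfun R T) :
  (0 < #|T|)%N -> 0 < mn -> in_class mn mx v -> 0 < OPT v.
Proof.
move=> T_gt0 mn_gt0 vC; apply: lt_le_trans (le_OPT v (partition_setT1 T_gt0)).
rewrite big_set1 (lt_le_trans mn_gt0) // (in_class_ge_min vC) //.
by rewrite -card_gt0 cardsT.
Qed.

Theorem theorem3 (R : realFieldType) (T : finType) (mn mx : R) :
  (0 < #|T|)%N -> 0 < mn -> mn <= mx -> 2 * mn <= mx -> mx < 3 * mn ->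
  exists phi : policy R T,
    [/\ non_wasteful mn mx phi, irrevocable mn mx phi &
        forall tb : tiebreak T, valid_tiebreak tb ->
          competitive_ratio_is mn mx phi tb 1].
Proof.
move=> T_gt0 mn_gt0 mn_le_mx _ mx_lt3.
exists (block_policy mx).
split; [exact: block_policy_non_wasteful | exact: block_policy_irrevocable |].
move=> tb vtb.
have ratio1 v pi : in_class mn mx v -> arrival_order pi ->
    SW v (greedy_outcome v (block_policy mx) tb pi) / OPT v = 1.
  move=> vC ao; rewrite (greedy_welfare T_gt0 mn_gt0 mx_lt3 vC vtb ao) divff //.
  by rewrite gt_eqF // (OPT_gt0 T_gt0 mn_gt0 vC).
split=> [r [v [pi [vC ao ->]]] | b lb]; first by rewrite ratio1.
have ao : arrival_order (enum T) := perm_refl _.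
have vC := in_class_const T mn_le_mx.
by apply: lb; exists (fun S => if S == set0 then 0 else mn), (enum T); rewrite ratio1.
Qed.
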